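(* Let $F=\mathbb{F}_q$ be a finite field of odd order $q$, and let $K/F$ be an extension of degree $3$. Then there exists a two-dimensional $F$-linear subspace $V\subset K$ such that whenever $y\in V$ and $y^2\in V$, we have $y=0$. Consequently $|V|=q^2=|K|^{2/3}$, and $V$ contains no $x,y\in K$ with $y\neq0$ such that $x,\,x+y,\,x+y^2\in V$. *)

From mathcomp Require Export all_boot all_algebra all_field.
Set Implicit Arguments.
Unset Strict Implicit.
Unset Printing Implicit Defensive.

(* Fix a plane W = span(1, x) in K and consider the planes d^-1 W for d not in W.
   If each of them contained some y <> 0 with y^2, count the pairs (d, y).
   A plane V containing y and y^2 (with y not in F) equals span(y, y^2), and
   writing y^4 = v + s y^3 with v in V, the element z = y^2 - (s/2) y also has
   z, z^2 in V; so every d has at least 2(q-1) partners y.  For fixed y the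
   admissible d form a single punctured line F^* d1: the quotient d/d1 stabilizes
   the plane d1^-1 W, and an element outside F stabilizing a nonzero proper
   subspace would make it a module over F(d/d1) = K.  Hence
   (q^3 - q^2) 2(q-1) <= q^3 (q-1), i.e. q <= 2, contradicting q odd. *)

From mathcomp Require Import all_boot all_algebra all_field.
From mathcomp Require Import zify.

Set Implicit Arguments.
Unset Strict Implicit.
Unset Printing Implicit Defensive.

Import GRing.Theory.
Local Open Scope ring_scope.

Lemma double_counting (T1 T2 : finType) (A : {set T1}) (R : T1 -> T2 -> bool) m n :
  (forall x, x \in A -> m <= #|[set y | R x y]|)%N ->
  (forall y, #|[set x | R x y]| <= n)%N ->
  (#|A| * m <= #|T2| * n)%N.
Proof.
move=> lbA ubT2; have card_sum (T : finType) (P : pred T) :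
    #|[set x | P x]| = (\sum_x P x)%N.
  by rewrite cardsE -sum1_card big_mkcond.
rewrite -sum_nat_const -[(#|T2| * n)%N]sum_nat_const.
apply: (@leq_trans (\sum_(x in A) #|[set y | R x y]|)); first exact: leq_sum.
apply: (@leq_trans (\sum_x #|[set y | R x y]|)).
  by rewrite [X in (_ <= X)%N](bigID [in A]) leq_addr.
under eq_bigr do rewrite card_sum.
by rewrite exchange_big; apply: leq_sum => y _; rewrite -card_sum.
Qed.

Lemma two_neq0_odd_card (F : finFieldType) : odd #|F| -> (2%:R : F) != 0.
Proof.
apply: contraTneq => two0.
have pchar2 : 2%N \in [pchar F] by rewrite inE two0 eqxx.
move: (logn 2 #|F|) (card_pprimeChar pchar2 : #|F| = _) => k cardF.
have := finNzRing_gt1 F; rewrite cardF oddX orbF.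
by case: k {cardF}.
Qed.

Section Planes.
Variables (F : fieldType) (vT : vectType F).

Lemma dim_addv_line (U : {vspace vT}) v :
  v \notin U -> \dim (U + <[v]>) = (\dim U).+1.
Proof.
move=> vNU; have v_neq0 : v != 0 by apply: contraNneq vNU => ->; rewrite mem0v.
rewrite dimv_disjoint_sum ?dim_vline ?v_neq0 ?addn1 //.
apply/eqP; rewrite -subv0; apply/subvP => w /memv_capP[wU /vlineP[k wk]].
rewrite memv0 wk scaler_eq0; have [// | k_neq0] := eqVneq k 0.
by move: wU; rewrite wk => /(memvZ k^-1); rewrite scalerA mulVf // scale1r (negPf vNU).
Qed.

Lemma plane_spanE (W : {vspace vT}) u v : \dim W = 2%N ->
  u \in W -> v \in W -> u != 0 -> v \notin <[u]>%VS -> W = (<[u]> + <[v]>)%VS.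
Proof.
move=> dimW uW vW u_neq0 vNu; apply/eqP; rewrite eq_sym eqEdim.
by rewrite subv_add -!memvE uW vW dim_addv_line // dim_vline u_neq0 dimW.
Qed.

End Planes.

Section Cosets.
Variables (F : fieldType) (L : fieldExtType F).

Lemma memv_cosetV (W : {vspace L}) d x :
  d != 0 -> (x \in (W * <[d^-1]>)%VS) = (d * x \in W).
Proof.
move=> d_neq0; apply/memv_cosetP/idP => [[w wW ->] | dxW].
  by rewrite mulrC divfK.
by exists (d * x); rewrite // mulrC mulKf.
Qed.

Lemma notin1_mem (V : {vspace L}) x :
  1 \notin V -> x \in V -> x != 0 -> x \notin 1%VS.
Proof.
move=> V1 xV x_neq0; apply: contra V1 => /vlineP[c xc].
have c_neq0 : c != 0 by apply: contraNneq x_neq0 => c0; rewrite xc c0 scale0r.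
by move: xV; rewrite xc => /(memvZ c^-1); rewrite scalerA mulVf // scale1r.
Qed.

End Cosets.

Section PrimeDegree.
Variables (F : fieldType) (L : fieldExtType F).
Hypothesis primeL : prime (\dim {:L}).

Lemma Fadjoin1_full (x : L) : x \notin 1%VS -> <<1; x>>%VS = fullv.
Proof.
move=> xN1; apply/eqP; rewrite eqEdim subvf /=.
have /(prime_nt_dvdP primeL) -> // : (\dim <<1; x>> %| \dim {:L})%N.
  exact: (@field_dimS _ _ _ {:L}%AS (subvf _)).
by rewrite dim_Fadjoin dimv1 muln1 adjoin_deg_eq1.
Qed.

Lemma dim_stable_dvdn (W : {vspace L}) (e : L) :
  e \notin 1%VS -> (<[e]> * W <= W)%VS -> (\dim {:L} %| \dim W)%N.
Proof.
move=> eN1 eWW; rewrite -(Fadjoin1_full eN1).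
apply: (@field_module_dimS _ _ <<1; e>>%AS); apply: agenv_modl.
by rewrite prodvDl subv_add prod1v subvv.
Qed.

End PrimeDegree.

Section CubicExtension.
Variables (F : fieldType) (L : fieldExtType F).
Hypothesis dimL : \dim {:L} = 3%N.

Lemma stable_plane_scalar (W : {vspace L}) (e : L) : \dim W = 2%N ->
  (forall w, w \in W -> e * w \in W) -> e \in 1%VS.
Proof.
move=> dimW eW; apply: contraT => eN1.
have : (\dim {:L} %| \dim W)%N.
  apply: (dim_stable_dvdn _ eN1); first by rewrite dimL.
  by apply/prodvP => _ w /vlineP[k ->] /eW; rewrite -scalerAl; apply: memvZ.
by rewrite dimL dimW.
Qed.

Lemma sqr_notin_span1 (x : L) : x \notin 1%VS -> x ^+ 2 \notin (1 + <[x]>)%VS.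
Proof.
move=> xN1; have dim_span : \dim (1 + <[x]>)%VS = 2%N.
  by rewrite dim_addv_line // dimv1.
apply: contra xN1 => x2_span; apply: (stable_plane_scalar dim_span).
move=> _ /memv_addP[_ /vlineP[a ->] [_ /vlineP[b ->] ->]].
rewrite mulrDr -!scalerAr mulr1 -expr2 rpredD ?memvZ //.
by rewrite memvE addvSr.
Qed.

Lemma sqr_notin_line (x : L) : x \notin 1%VS -> x ^+ 2 \notin <[x]>%VS.
Proof.
move=> /sqr_notin_span1; apply: contra; apply/subvP; exact: addvSr.
Qed.

Section SquarePlane.
Variables (V : {vspace L}) (y : L).
Hypotheses (dimV : \dim V = 2%N) (yN1 : y \notin 1%VS).
Hypotheses (yV : y \in V) (y2V : y ^+ 2 \in V).

Let y_neq0 : y != 0. Proof. by apply: contraNneq yN1 => ->; rewrite mem0v. Qed.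

Lemma sqr_planeE : V = (<[y]> + <[y ^+ 2]>)%VS.
Proof. exact: plane_spanE (sqr_notin_line yN1). Qed.

Lemma sqr_plane_stabilizer (e : L) :
  e * y \in V -> e * y ^+ 2 \in V -> e \in 1%VS.
Proof.
move=> eyV ey2V; apply: (stable_plane_scalar dimV).
rewrite sqr_planeE => _ /memv_addP[_ /vlineP[a ->] [_ /vlineP[b ->] ->]].
by rewrite -sqr_planeE mulrDr -!scalerAr rpredD ?memvZ.
Qed.

Lemma cube_notin_sqr_plane : y ^+ 3 \notin V.
Proof.
rewrite sqr_planeE; apply: contra (sqr_notin_span1 yN1).
case/memv_addP => _ /vlineP[a ->] [_ /vlineP[b ->] y3E].
have -> : y ^+ 2 = a%:A + b *: y.
  apply: (mulfI y_neq0); rewrite -exprS y3E mulrDr -!scalerAr mulr1.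
  by rewrite -expr2.
by rewrite rpredD ?memvZ ?memvE ?addvSl ?addvSr.
Qed.

Hypothesis two_neq0 : (2%:R : F) != 0.

Lemma sqr_plane_second_witness :
  exists z, [/\ z \notin <[y]>%VS, z \in V & z ^+ 2 \in V].
Proof.
have V3_full : (V + <[y ^+ 3]>)%VS = fullv.
  apply/eqP; rewrite eqEdim subvf dimL.
  by rewrite dim_addv_line ?dimV ?cube_notin_sqr_plane.
have : y ^+ 4 \in (V + <[y ^+ 3]>)%VS by rewrite V3_full memvf.
case/memv_addP => v vV [_ /vlineP[s ->] y4E].
pose t := s / 2%:R; have s_2t : t *+ 2 = s by rewrite -mulr_natr divfK.
exists (y ^+ 2 - t *: y); split.
- apply: contra (sqr_notin_line yN1) => zy.
  by rewrite -(subrK (t *: y) (y ^+ 2)) rpredD ?memvZ ?memv_line.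
- by rewrite rpredB ?memvZ.
have -> : (y ^+ 2 - t *: y) ^+ 2 = y ^+ 4 - (t *+ 2) *: y ^+ 3 + t ^+ 2 *: y ^+ 2.
  by rewrite sqrrB -exprM exprZn -scalerAr -exprSr -scalerMnl.
by rewrite s_2t y4E addrK rpredD ?memvZ.
Qed.

End SquarePlane.
End CubicExtension.

Section FiniteVector.
Variables (F : finFieldType) (vT : vectType F).

Definition punctured_line (u : finvect_type vT) : {set finvect_type vT} :=
  [set a *: u | a in [set~ 0]].

Lemma card_punctured_line u : u != 0 -> #|punctured_line u| = (#|F| - 1)%N.
Proof.
move=> u_neq0; rewrite card_in_imset ?cardsC1 ?subn1 // => a b _ _ /eqP.
by rewrite -subr_eq0 -scalerBl scaler_eq0 (negPf u_neq0) orbF subr_eq0 => /eqP.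
Qed.

Lemma card_punctured_lines u v : u != 0 -> v \notin <[u]>%VS ->
  #|punctured_line u :|: punctured_line v| = (2 * (#|F| - 1))%N.
Proof.
move=> u_neq0 vNu; have v_neq0 : v != 0.
  by apply: contraNneq vNu => ->; rewrite mem0v.
rewrite cardsU; have -> : punctured_line u :&: punctured_line v = set0.
  apply/setP => w; rewrite !inE; apply/andP => -[/imsetP[a _ ->]].
  case/imsetP => b; rewrite !inE => b_neq0 abE; case/negP: vNu.
  by rewrite -[v](scalerK b_neq0) -abE scalerA memvZ ?memv_line.
by rewrite cards0 subn0 !card_punctured_line // mul2n addnn.
Qed.

End FiniteVector.

Section FiniteCubicExtension.
Variables (F : finFieldType) (L : fieldExtType F).
Hypothesis dimL : \dim {:L} = 3%N.
Local Notation K := (finvect_type L).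

Definition sqr_witnesses (V : {vspace K}) : {set K} :=
  [set y | [&& y != 0, y \in V & y ^+ 2 \in V]].

Lemma card_cubic_ext : #|K| = (#|F| ^ 3)%N.
Proof. by have := card_vspace (fullv : {vspace K}); rewrite card_vspacef dimL. Qed.

Lemma card_sqr_witnesses (V : {vspace K}) y : (2%:R : F) != 0 ->
    \dim V = 2%N -> y \notin 1%VS -> y \in V -> y ^+ 2 \in V ->
  (2 * (#|F| - 1) <= #|sqr_witnesses V|)%N.
Proof.
move=> two_neq0 dimV yN1 yV y2V.
have y_neq0 : y != 0 by apply: contraNneq yN1 => ->; rewrite mem0v.
have [z [zNy zV z2V]] := sqr_plane_second_witness dimL dimV yN1 yV y2V two_neq0.
have z_neq0 : z != 0 by apply: contraNneq zNy => ->; rewrite mem0v.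
rewrite -(card_punctured_lines y_neq0 zNy); apply/subset_leq_card/subsetP.
by move=> x /setUP[] /imsetP[a]; rewrite !inE => a_neq0 ->;
  rewrite scaler_eq0 negb_or a_neq0 exprZn !memvZ ?y_neq0 ?z_neq0.
Qed.

Definition coset_witness (W : {vspace K}) (d y : K) :=
  [&& d \notin W, y != 0, d * y \in W & d * y ^+ 2 \in W].

Lemma coset_witnessE (W : {vspace K}) d y : d \notin W ->
  coset_witness W d y = (y \in sqr_witnesses (W * <[d^-1]>)).
Proof.
move=> dNW; have d_neq0 : d != 0 by apply: contraNneq dNW => ->; rewrite mem0v.
by rewrite /coset_witness inE dNW !memv_cosetV.
Qed.

Lemma card_coset_witnesses (W : {vspace K}) d : (2%:R : F) != 0 ->
    \dim W = 2%N -> d \notin W -> sqr_witnesses (W * <[d^-1]>) != set0 ->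
  (2 * (#|F| - 1) <= #|[set y | coset_witness W d y]|)%N.
Proof.
move=> two_neq0 dimW dNW /set0Pn[y]; rewrite inE => /and3P[y_neq0 yV y2V].
have d_neq0 : d != 0 by apply: contraNneq dNW => ->; rewrite mem0v.
have -> : [set y | coset_witness W d y] = sqr_witnesses (W * <[d^-1]>).
  by apply/setP => z; rewrite inE coset_witnessE.
apply: (card_sqr_witnesses two_neq0 _ _ yV y2V).
  by rewrite dim_cosetv ?invr_neq0.
by apply: (notin1_mem _ yV); rewrite // memv_cosetV // mulr1.
Qed.

Lemma card_witnessed_cosets (W : {vspace K}) y : \dim W = 2%N ->
  (#|[set d | coset_witness W d y]| <= #|F| - 1)%N.
Proof.
move=> dimW; have [-> | [d1]] := set_0Vmem [set d | coset_witness W d y].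
  by rewrite cards0.
rewrite inE => /and4P[d1NW y_neq0 d1yW d1y2W].
have d1_neq0 : d1 != 0 by apply: contraNneq d1NW => ->; rewrite mem0v.
pose V1 := (W * <[d1^-1]>)%VS.
have dimV1 : \dim V1 = 2%N by rewrite dim_cosetv ?invr_neq0.
have yN1 : y \notin 1%VS.
  by apply: (@notin1_mem _ _ V1); rewrite ?memv_cosetV ?mulr1.
rewrite -(card_punctured_line d1_neq0); apply/subset_leq_card/subsetP => d.
rewrite inE => /and4P[dNW _ dyW dy2W].
have d_neq0 : d != 0 by apply: contraNneq dNW => ->; rewrite mem0v.
have d1_mulK x : d1 * (d / d1 * x) = d * x by rewrite mulrA [d1 * _]mulrC divfK.
have /vlineP[c dE] : d / d1 \in 1%VS.
  by apply: (sqr_plane_stabilizer dimL dimV1 yN1); rewrite ?memv_cosetV ?d1_mulK.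
apply/imsetP; exists c; last by rewrite -mulr_algl -dE divfK.
rewrite !inE; apply: contraNneq d_neq0 => c0.
by rewrite -(divfK d1_neq0 d) dE c0 scale0r mul0r.
Qed.

Lemma exists_sqr_free_plane :
  odd #|F| -> exists2 V : {vspace K}, \dim V = 2%N & sqr_witnesses V = set0.
Proof.
move=> oddF; have two_neq0 := two_neq0_odd_card oddF.
have q_gt2 : (2 < #|F|)%N by move: (finNzRing_gt1 F) oddF; case: #|F| => [|[|[|]]].
have [x _ xN1] : exists2 x : K, x \in fullv & x \notin 1%VS.
  by apply/subvPn/negP => /dimvS; rewrite dimL dimv1.
pose W := (1 + <[x]>)%VS; have dimW : \dim W = 2%N by rewrite dim_addv_line ?dimv1.
have [d /andP[dNW /eqP no_witness] | all_witnessed] :=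
  pickP (fun d => (d \notin W) && (sqr_witnesses (W * <[d^-1]>) == set0)).
  have d_neq0 : d != 0 by apply: contraNneq dNW => ->; rewrite mem0v.
  by exists (W * <[d^-1]>)%VS; rewrite ?dim_cosetv ?invr_neq0.
have witnessed d : d \in [set d | d \notin W] ->
    (2 * (#|F| - 1) <= #|[set y | coset_witness W d y]|)%N.
  rewrite inE => dNW; apply: card_coset_witnesses => //.
  by case/nandP: (negbT (all_witnessed d)) => // /negP.
have := double_counting witnessed (fun y => card_witnessed_cosets y dimW).
have cardNW : (#|[set d | d \notin W]| + #|F| ^ 2 = #|F| ^ 3)%N.
  rewrite -card_cubic_ext -(cardsC [set d | d \in W]) addnC; congr (_ + _)%N.
    by rewrite cardsE card_vspace dimW.
  by apply: eq_card => d; rewrite !inE.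
by move: cardNW; rewrite card_cubic_ext; nia.
Qed.

End FiniteCubicExtension.

Theorem theorem5p1 (F : finFieldType) (K : fieldExtType F) :
  odd #|F| -> \dim {: K}%VS = 3%N ->
  exists V : {vspace finvect_type K},
    [/\ \dim V = 2%N,
        (forall y : finvect_type K, y \in V -> y ^+ 2 \in V -> y = 0),
        #|V| = (#|F| ^ 2)%N,
        (#|V| ^ 3 = #|finvect_type K| ^ 2)%N
      & (forall x y : finvect_type K, y != 0 ->
           ~ [/\ x \in V, x + y \in V & x + y ^+ 2 \in V])].
Proof.
move=> oddF dimK; have [V dimV no_witness] := exists_sqr_free_plane dimK oddF.
have sqr_free y : y \in V -> y ^+ 2 \in V -> y = 0.
  move=> yV y2V; apply/eqP; apply: contraT => y_neq0.
  by rewrite -(in_set0 y) -no_witness inE y_neq0 yV y2V.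
have cardV : #|V| = (#|F| ^ 2)%N by rewrite card_vspace dimV.
exists V; split => //; first by rewrite cardV (card_cubic_ext dimK) -!expnM.
move=> x y y_neq0 [xV xyV xy2V]; case/eqP: y_neq0; apply: sqr_free.
  by rewrite -(addKr x y) rpredD ?rpredN.
by rewrite -(addKr x (y ^+ 2)) rpredD ?rpredN.
Qed.
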